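(* Let $\mathbb{K}$ be a field of characteristic $2$, let $(A,\cdot,\{-,-\},(-)^{\{2\}})$ be a restricted Poisson algebra, let $k\ge1$, and let $(A^t_k,\cdot,\mu_{(k)},\omega_{(k)})$ and $(A^t_k,\cdot,\mu'_{(k)},\omega'_{(k)})$ be two equivalent formal deformations of order $k$ of $A$, with first-order terms $(\mu_1,\omega_1)$ and $(\mu'_1,\omega'_1)$ respectively. Then $(\mu_1,\omega_1)$ and $(\mu_1',\omega_1')$ define the same class in $\mathrm{H}^2_{\rm PA}(A)$.
   Context: $\mathbb{K}$ has characteristic $2$. Restricted Poisson algebra: commutative associative $(A,\cdot)$ with Lie bracket satisfying $\{ab,c\}=a\{b,c\}+b\{a,c\}$, and a map $(-)^{\{2\}}$ with $(\lambda x)^{\{2\}}=\lambda^2x^{\{2\}}$, $\mathrm{ad}_{x^{\{2\}}}=\mathrm{ad}_x^2$, $(x+y)^{\{2\}}=x^{\{2\}}+y^{\{2\}}+\{x,y\}$, $(xy)^{\{2\}}=x^2y^{\{2\}}+y^2x^{\{2\}}+xy\{x,y\}$. $\mathfrak{X}^n(A)$: alternating $n$-linear maps $A^n\to A$ that are derivations of $\cdot$ in each argument. $C^1_{\rm PA}(A)=\mathfrak{X}^1(A)$. $C^2_{\rm PA}(A)$: pairs $(\varphi,\omega)$, $\varphi\in\mathfrak{X}^2(A)$, $\omega:A\to A$ with $\omega(\lambda x)=\lambda^2\omega(x)$, $\omega(x+y)=\omega(x)+\omega(y)+\varphi(x,y)$, $\omega(xy)=x^2\omega(y)+y^2\omega(x)+xy\varphi(x,y)$.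 $\mathrm{d}^1\psi=(\mathrm{d}_{\rm CE}\psi,\delta^1\psi)$ with $\mathrm{d}_{\rm CE}\psi(x,y)=\psi(\{x,y\})+\{x,\psi(y)\}+\{y,\psi(x)\}$ and $\delta^1\psi(x)=\psi(x^{\{2\}})+\{x,\psi(x)\}$; $\mathrm{d}^2(\varphi,\omega)=(\mathrm{d}_{\rm CE}\varphi,\delta^2\omega)$ with $\mathrm{d}_{\rm CE}\varphi(x,y,z)=\varphi(\{x,y\},z)+\varphi(\{x,z\},y)+\varphi(\{y,z\},x)+\{x,\varphi(y,z)\}+\{y,\varphi(x,z)\}+\{z,\varphi(x,y)\}$, $\delta^2\omega(x,z)=\{x,\varphi(x,z)\}+\{z,\omega(x)\}+\varphi(x^{\{2\}},z)+\varphi(\{x,z\},x)$. $\mathrm{H}^2_{\rm PA}(A)=\ker\mathrm{d}^2/\mathrm{im}\,\mathrm{d}^1$. $\mathbb{K}^t_k=\mathbb{K}[t]/(t^{k+1})$, $A^t_k=A\otimes\mathbb{K}^t_k$. A formal deformation of order $k$: $\mu_{(k)}=\{-,-\}+\sum_{i=1}^kt^i\mu_i$, $\omega_{(k)}=(-)^{\{2\}}+\sum_{i=1}^kt^i\omega_i$ with $(\mu_i,\omega_i)\in C^2_{\rm PA}(A)$ such that $(A^t_k,\mu_{(k)},\omega_{(k)})$ is a restricted Lie algebra over $\mathbb{K}^t_k$ ($\mu$ extended bilinearly, $\omega$ extended by $\omega(\lambda X)=\lambda^2\omega(X)$, $\omega(X+Y)=\omega(X)+\omega(Y)+\mu(X,Y)$).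 Two such deformations are equivalent if there is an isomorphism of restricted Poisson algebras (preserving $\cdot$, the brackets and the 2-maps) between them of the form $\Psi=\mathrm{id}+\sum_{i\ge1}t^i\psi_i$ with $\psi_i:A\to A$ linear (extended $\mathbb{K}^t_k$-linearly). *)

From HB Require Import structures.
From mathcomp Require Import all_boot all_order all_algebra.
Set Implicit Arguments. Unset Strict Implicit. Unset Printing Implicit Defensive.
Import GRing.Theory.
Local Open Scope ring_scope.

Section RPA.
Variables (K : fieldType) (A : lmodType K).

Definition lin1 (f : A -> A) := forall (a : K) x y, f (a *: x + y) = a *: f x + f y.
Definition bilin (m : A -> A -> A) :=
  (forall (a : K) x y z, m (a *: x + y) z = a *: m x z + m y z) /\
  (forall (a : K) x y z, m z (a *: x + y) = a *: m z x + m z y).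

Definition restricted_poisson (mul br : A -> A -> A) (sq : A -> A) :=
  [/\ [/\ bilin mul, (forall x y, mul x y = mul y x) &
          (forall x y z, mul x (mul y z) = mul (mul x y) z)],
      [/\ bilin br, (forall x, br x x = 0) &
          (forall x y z, br x (br y z) + br y (br z x) + br z (br x y) = 0)],
      (forall a b c, br (mul a b) c = mul a (br b c) + mul b (br a c)) &
      [/\ (forall (l : K) x, sq (l *: x) = (l ^+ 2) *: sq x),
          (forall x y, br (sq x) y = br x (br x y)),
          (forall x y, sq (x + y) = sq x + sq y + br x y) &
          (forall x y, sq (mul x y) =
             mul (mul x x) (sq y) + mul (mul y y) (sq x) + mul (mul x y) (br x y))]].

Definition C1 (mul : A -> A -> A) (psi : A -> A) :=
  lin1 psi /\ forall x y, psi (mul x y) = mul x (psi y) + mul y (psi x).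

Definition X2 (mul : A -> A -> A) (phi : A -> A -> A) :=
  [/\ bilin phi, (forall x, phi x x = 0),
      (forall x y z, phi (mul x y) z = mul x (phi y z) + mul y (phi x z)) &
      (forall x y z, phi z (mul x y) = mul x (phi z y) + mul y (phi z x))].

Definition C2 (mul : A -> A -> A) (phi : A -> A -> A) (om : A -> A) :=
  [/\ X2 mul phi, (forall (l : K) x, om (l *: x) = (l ^+ 2) *: om x),
      (forall x y, om (x + y) = om x + om y + phi x y) &
      (forall x y, om (mul x y) = mul (mul x x) (om y) + mul (mul y y) (om x)
                                  + mul (mul x y) (phi x y))].

Definition dCE1 (br : A -> A -> A) (psi : A -> A) (x y : A) :=
  psi (br x y) + br x (psi y) + br y (psi x).
Definition delta1 (br : A -> A -> A) (sq : A -> A) (psi : A -> A) (x : A) :=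
  psi (sq x) + br x (psi x).
Definition dCE2 (br : A -> A -> A) (phi : A -> A -> A) (x y z : A) :=
  phi (br x y) z + phi (br x z) y + phi (br y z) x
  + br x (phi y z) + br y (phi x z) + br z (phi x y).
Definition delta2 (br : A -> A -> A) (sq : A -> A) (phi : A -> A -> A)
    (om : A -> A) (x z : A) :=
  br x (phi x z) + br z (om x) + phi (sq x) z + phi (br x z) x.

Definition cocycle2 br sq (phi : A -> A -> A) (om : A -> A) :=
  (forall x y z, dCE2 br phi x y z = 0) /\ (forall x z, delta2 br sq phi om x z = 0).

(** Elements of A^t_k = A ⊗ K[t]/(t^{k+1}) are represented by coefficient
    sequences nat -> A (X = sum_i t^i X i); only coefficients n <= k matter.
    Scalars of K^t_k are sequences nat -> K. *)
Definition tadd (X Y : nat -> A) : nat -> A := fun n => X n + Y n.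
Definition tscale (l : nat -> K) (X : nat -> A) : nat -> A :=
  fun n => \sum_(i < n.+1) l i *: X (n - i)%N.
Definition Ksq (l : nat -> K) : nat -> K :=
  fun n => \sum_(i < n.+1) l i * l (n - i)%N.
Definition tmul (mul : A -> A -> A) (X Y : nat -> A) : nat -> A :=
  fun n => \sum_(i < n.+1) mul (X i) (Y (n - i)%N).
(** mu_(k) = sum_i t^i mu_i (mu 0 is the original bracket), extended bilinearly *)
Definition tbr (mu : nat -> A -> A -> A) (X Y : nat -> A) : nat -> A :=
  fun n => \sum_(i < n.+1) \sum_(j < (n - i).+1) mu i (X j) (Y (n - i - j)%N).
(** omega_(k) = sum_m t^m om_m extended by omega(lX) = l^2 omega(X),
    omega(X+Y) = omega X + omega Y + mu(X,Y):
    omega(sum_i t^i x_i) = sum_i t^(2i) omega_(k)(x_i) + sum_(i<j) t^(i+j) mu_(k)(x_i,x_j) *)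
Definition tsq (mu : nat -> A -> A -> A) (om : nat -> A -> A) (X : nat -> A)
  : nat -> A :=
  fun n => \sum_(m < n.+1)
     (\sum_(i < n.+1 | (2 * i + m)%N == n) om m (X i)
      + \sum_(i < n.+1) \sum_(j < n.+1 | (i < j)%N && ((i + j + m)%N == n))
           mu m (X i) (X j)).

Definition teq (k : nat) (X Y : nat -> A) := forall n, (n <= k)%N -> X n = Y n.

Definition restricted_lie_t (k : nat) (M : (nat -> A) -> (nat -> A) -> nat -> A)
   (W : (nat -> A) -> nat -> A) :=
  [/\ ((forall l X Y Z, teq k (M (tadd (tscale l X) Y) Z)
                             (tadd (tscale l (M X Z)) (M Y Z))) /\
      (forall l X Y Z, teq k (M Z (tadd (tscale l X) Y))
                             (tadd (tscale l (M Z X)) (M Z Y)))),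
      (forall X, teq k (M X X) (fun _ => 0)),
      (forall X Y Z, teq k (tadd (tadd (M X (M Y Z)) (M Y (M Z X))) (M Z (M X Y)))
                           (fun _ => 0)) &
      [/\ (forall l X, teq k (W (tscale l X)) (tscale (Ksq l) (W X))),
          (forall X Y, teq k (W (tadd X Y)) (tadd (tadd (W X) (W Y)) (M X Y))) &
          (forall X Y, teq k (M (W X) Y) (M X (M X Y)))]].

Definition formal_deformation (mul br : A -> A -> A) (sq : A -> A) (k : nat)
    (mu : nat -> A -> A -> A) (om : nat -> A -> A) :=
  [/\ mu 0%N = br, om 0%N = sq,
      (forall i, (1 <= i <= k)%N -> C2 mul (mu i) (om i)) &
      restricted_lie_t k (tbr mu) (tsq mu om)].

Definition tPsi (psi : nat -> A -> A) (X : nat -> A) : nat -> A :=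
  fun n => X n + \sum_(i < n.+1 | (0 < i)%N) psi i (X (n - i)%N).

Definition equiv_deformations (mul : A -> A -> A) (k : nat)
    (mu : nat -> A -> A -> A) (om : nat -> A -> A)
    (mu' : nat -> A -> A -> A) (om' : nat -> A -> A) :=
  exists psi : nat -> A -> A,
   [/\ [/\ (forall i, (1 <= i <= k)%N -> lin1 (psi i)),
       (forall X Y, teq k (tPsi psi X) (tPsi psi Y) -> teq k X Y) &
       (forall Y, exists X, teq k (tPsi psi X) Y)],
       (forall X Y, teq k (tPsi psi (tmul mul X Y)) (tmul mul (tPsi psi X) (tPsi psi Y))),
       (forall X Y, teq k (tPsi psi (tbr mu X Y)) (tbr mu' (tPsi psi X) (tPsi psi Y))) &
       (forall X, teq k (tPsi psi (tsq mu om X)) (tsq mu' om' (tPsi psi X)))].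

End RPA.

(* Only the coefficients of t^0 and t^1 matter.  Evaluating the restricted Lie
   algebra axioms of a deformation on constant elements x, y, z of A^t_k and
   reading off the coefficient of t, the Jacobi identity becomes
   d_CE(mu_1) = 0 and the identity ad_{omega(X)} = ad_X^2 becomes
   delta^2(omega_1) = 0.  Likewise, the t-coefficient of an equivalence
   Psi = id + t psi_1 + ... applied to x*y, mu(x, y) and omega(x) says that
   psi_1 is a derivation with mu'_1 - mu_1 = d_CE(psi_1) and
   omega'_1 - omega_1 = delta^1(psi_1).  Characteristic 2 absorbs all signs. *)
From HB Require Import structures.
From mathcomp Require Import all_boot all_order all_algebra.
Set Implicit Arguments. Unset Strict Implicit. Unset Printing Implicit Defensive.
Import GRing.Theory.
Local Open Scope ring_scope.

Section Pchar2Lmodule.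
Variables (R : nzRingType) (V : lmodType R).
Hypothesis pchar2 : 2%N \in [pchar R].

Lemma addvv_pchar2 (v : V) : v + v = 0.
Proof. by rewrite -mulr2n -scaler_nat (pcharf0 pchar2) scale0r. Qed.

Lemma oppv_pchar2 (v : V) : - v = v.
Proof. by apply/eqP; rewrite eq_sym -addr_eq0 addvv_pchar2. Qed.

Lemma eqv_pchar2 (u v : V) : (u = v) <-> (u + v = 0).
Proof.
split=> [->|/eqP]; first exact: addvv_pchar2.
by rewrite addr_eq0 oppv_pchar2 => /eqP.
Qed.

End Pchar2Lmodule.

Section Bilinear.
Variables (K : fieldType) (A : lmodType K) (m : A -> A -> A).
Hypothesis m_bilin : bilin m.

Lemma bilinDl x y z : m (x + y) z = m x z + m y z.
Proof. by rewrite -[x]scale1r m_bilin.1 !scale1r. Qed.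

Lemma bilinDr x y z : m z (x + y) = m z x + m z y.
Proof. by rewrite -[x]scale1r m_bilin.2 !scale1r. Qed.

Lemma bilin0l z : m 0 z = 0.
Proof. by rewrite -[0 in LHS](addNr z) -scaleN1r m_bilin.1 scaleN1r addNr. Qed.

Lemma bilin0r z : m z 0 = 0.
Proof. by rewrite -[0 in LHS](addNr z) -scaleN1r m_bilin.2 scaleN1r addNr. Qed.

Lemma bilin_alt_antisym : (forall x, m x x = 0) -> forall x y, m x y = - m y x.
Proof.
move=> m_alt x y; apply/eqP; rewrite -addr_eq0.
have := m_alt (x + y).
by rewrite bilinDl !bilinDr !m_alt add0r addr0 => ->.
Qed.

Lemma bilin_alt_sym_pchar2 :
  2%N \in [pchar K] -> (forall x, m x x = 0) -> forall x y, m x y = m y x.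
Proof.
by move=> pchar2 m_alt x y; rewrite (bilin_alt_antisym m_alt) (oppv_pchar2 pchar2).
Qed.

End Bilinear.

Section FirstOrderCoefficients.
Variables (K : fieldType) (A : lmodType K).
Implicit Types (mu : nat -> A -> A -> A) (om psi : nat -> A -> A) (X Y : nat -> A).

Definition tconst (x : A) : nat -> A := fun n => if n is 0%N then x else 0.

Lemma tmul_coef0 m X Y : tmul m X Y 0%N = m (X 0%N) (Y 0%N).
Proof. by rewrite /tmul big_ord_recl big_ord0 addr0. Qed.

Lemma tmul_coef1 m X Y : tmul m X Y 1%N = m (X 0%N) (Y 1%N) + m (X 1%N) (Y 0%N).
Proof. by rewrite /tmul !big_ord_recl big_ord0 addr0. Qed.

Lemma tbr_coef0 mu X Y : tbr mu X Y 0%N = mu 0%N (X 0%N) (Y 0%N).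
Proof. by rewrite /tbr !big_ord_recl !big_ord0 !addr0. Qed.

Lemma tbr_coef1 mu X Y :
  tbr mu X Y 1%N =
  mu 0%N (X 0%N) (Y 1%N) + mu 0%N (X 1%N) (Y 0%N) + mu 1%N (X 0%N) (Y 0%N).
Proof. by rewrite /tbr !big_ord_recl !big_ord0 !addr0. Qed.

Lemma tsq_coef0 mu om X : tsq mu om X 0%N = om 0%N (X 0%N).
Proof.
rewrite /tsq; do 8 rewrite ?big_mkcond ?big_ord_recr ?big_ord0 /=.
by rewrite !(addr0, add0r).
Qed.

Lemma tsq_coef1 mu om X : tsq mu om X 1%N = mu 0%N (X 0%N) (X 1%N) + om 1%N (X 0%N).
Proof.
rewrite /tsq; do 8 rewrite ?big_mkcond ?big_ord_recr ?big_ord0 /=.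
by rewrite !(addr0, add0r).
Qed.

Lemma tPsi_coef0 psi X : tPsi psi X 0%N = X 0%N.
Proof. by rewrite /tPsi big_mkcond big_ord_recl big_ord0 /= !addr0. Qed.

Lemma tPsi_coef1 psi X : tPsi psi X 1%N = X 1%N + psi 1%N (X 0%N).
Proof. by rewrite /tPsi big_mkcond !big_ord_recl big_ord0 /= add0r addr0. Qed.

End FirstOrderCoefficients.

Section DeformationCocycle.
Variables (K : fieldType) (A : lmodType K).
Variables (mul br : A -> A -> A) (sq : A -> A) (k : nat).
Variables (mu : nat -> A -> A -> A) (om : nat -> A -> A).
Hypotheses (pchar2 : 2%N \in [pchar K]) (k_gt0 : (0 < k)%N).
Hypotheses (br_bilin : bilin br) (br_alt : forall x, br x x = 0).
Hypothesis deformation : formal_deformation mul br sq k mu om.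

Lemma deformation_cocycle2 : cocycle2 br sq (mu 1%N) (om 1%N).
Proof.
have [mu0 om0 mu_C2 [_ _ jacobi [_ _ ad_sq]]] := deformation.
have [[mu1_bilin mu1_alt _ _] _ _ _] := mu_C2 1%N k_gt0.
have mu1C := bilin_alt_sym_pchar2 mu1_bilin pchar2 mu1_alt.
have brC := bilin_alt_sym_pchar2 br_bilin pchar2 br_alt.
split=> [x y z | x z].
- have := jacobi (tconst x) (tconst y) (tconst z) 1%N k_gt0.
  rewrite /tadd !tbr_coef1 !tbr_coef0 /tconst /= mu0.
  rewrite ?(bilin0l br_bilin) ?(bilin0r br_bilin).
  rewrite ?(bilin0l mu1_bilin) ?(bilin0r mu1_bilin).
  rewrite ?(addr0, add0r) => <-.
  rewrite /dCE2 !(mu1C (br _ _)) (brC x z) (mu1C x z).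
  by rewrite [LHS](ACl ((4*3)*(5*2)*(6*1))).
- have := ad_sq (tconst x) (tconst z) 1%N k_gt0.
  rewrite !tbr_coef1 !tbr_coef0 tsq_coef1 tsq_coef0 /tconst /= mu0 om0.
  rewrite ?(bilin0l br_bilin) ?(bilin0r br_bilin).
  rewrite ?(bilin0l mu1_bilin) ?(bilin0r mu1_bilin).
  rewrite ?(addr0, add0r) => ad_sq_x_z.
  rewrite /delta2 (brC z) (mu1C (br x z)) [LHS](ACl ((2*3)*(1*4))).
  by rewrite /= ad_sq_x_z addvv_pchar2.
Qed.
End DeformationCocycle.

Section EquivalenceCoboundary.
Variables (K : fieldType) (A : lmodType K).
Variables (mul br : A -> A -> A) (sq : A -> A) (k : nat).
Variables (mu mu' : nat -> A -> A -> A) (om om' psi : nat -> A -> A).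
Hypotheses (pchar2 : 2%N \in [pchar K]) (k_gt0 : (0 < k)%N).
Hypotheses (br_bilin : bilin br) (br_alt : forall x, br x x = 0).
Hypotheses (mu0 : mu 0%N = br) (mu'0 : mu' 0%N = br) (om0 : om 0%N = sq).

Lemma tPsi_tmul_derivation :
  bilin mul -> (forall x y, mul x y = mul y x) ->
  (forall X Y, teq k (tPsi psi (tmul mul X Y)) (tmul mul (tPsi psi X) (tPsi psi Y))) ->
  forall x y, psi 1%N (mul x y) = mul x (psi 1%N y) + mul y (psi 1%N x).
Proof.
move=> mul_bilin mulC psi_mul x y.
have := psi_mul (tconst x) (tconst y) 1%N k_gt0.
rewrite tPsi_coef1 !tmul_coef1 !tmul_coef0 !tPsi_coef0 !tPsi_coef1 /tconst /=.
by rewrite (bilin0l mul_bilin) (bilin0r mul_bilin) !(addr0, add0r) (mulC (psi 1%N x)).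
Qed.

Lemma tPsi_tbr_dCE1 :
  (forall X Y, teq k (tPsi psi (tbr mu X Y)) (tbr mu' (tPsi psi X) (tPsi psi Y))) ->
  forall x y, mu' 1%N x y - mu 1%N x y = dCE1 br (psi 1%N) x y.
Proof.
move=> psi_br x y.
have := psi_br (tconst x) (tconst y) 1%N k_gt0.
rewrite tPsi_coef1 !tbr_coef1 !tbr_coef0 !tPsi_coef0 !tPsi_coef1 /tconst /= mu0 mu'0.
rewrite (bilin0l br_bilin) (bilin0r br_bilin) !(addr0, add0r).
rewrite /dCE1 (oppv_pchar2 pchar2) (bilin_alt_sym_pchar2 br_bilin pchar2 br_alt y).
move/(eqv_pchar2 pchar2) => psi_br_x_y; apply/(eqv_pchar2 pchar2); rewrite -psi_br_x_y.
by rewrite !addrA [LHS](ACl (2*3*4*5*1)).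
Qed.

Lemma tPsi_tsq_delta1 :
  (forall X, teq k (tPsi psi (tsq mu om X)) (tsq mu' om' (tPsi psi X))) ->
  forall x, om' 1%N x - om 1%N x = delta1 br sq (psi 1%N) x.
Proof.
move=> psi_sq x.
have := psi_sq (tconst x) 1%N k_gt0.
rewrite tPsi_coef1 !tsq_coef1 tsq_coef0 !tPsi_coef0 !tPsi_coef1 /tconst /= mu0 mu'0 om0.
rewrite (bilin0r br_bilin) !(addr0, add0r) /delta1 (oppv_pchar2 pchar2).
move/(eqv_pchar2 pchar2) => psi_sq_x; apply/(eqv_pchar2 pchar2); rewrite -psi_sq_x.
by rewrite !addrA [LHS](ACl (2*3*4*1)).
Qed.
End EquivalenceCoboundary.

Theorem mainTheorem16 (K : fieldType) (A : lmodType K)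
  (mul br : A -> A -> A) (sq : A -> A) (k : nat)
  (mu mu' : nat -> A -> A -> A) (om om' : nat -> A -> A) :
  2%N \in [pchar K] ->
  restricted_poisson mul br sq ->
  (1 <= k)%N ->
  formal_deformation mul br sq k mu om ->
  formal_deformation mul br sq k mu' om' ->
  equiv_deformations mul k mu om mu' om' ->
  [/\ cocycle2 br sq (mu 1%N) (om 1%N),
      cocycle2 br sq (mu' 1%N) (om' 1%N) &
      exists psi : A -> A,
        [/\ C1 mul psi,
            (forall x y, mu' 1%N x y - mu 1%N x y = dCE1 br psi x y) &
            (forall x, om' 1%N x - om 1%N x = delta1 br sq psi x)]].
Proof.
move=> pchar2 [[mul_bilin mulC _] [br_bilin br_alt _] _ _] k_gt0 D D'.
move=> [psi [[psi_lin _ _] psi_mul psi_br psi_sq]].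
have [mu0 om0 _ _] := D; have [mu'0 _ _ _] := D'.
split; [exact: deformation_cocycle2 D | exact: deformation_cocycle2 D' |].
exists (psi 1%N); split.
- by split; [exact: psi_lin | exact: tPsi_tmul_derivation psi_mul].
- exact: tPsi_tbr_dCE1 psi_br.
- exact: tPsi_tsq_delta1 psi_sq.
Qed.
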